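(* Let $k,n,r\ge0$ and $i\in\mathbb Z$. The groups $\mathcal D(\underline{\mathbb Z/2})(\Sigma^iH,Y)$ for $Y$ one of the complexes below are as follows, and are zero in all cases not listed: (a) $\mathcal D(\Sigma^iH,A_k)=\mathbb Z/2$ if $0\le i\le k$; (b) $\mathcal D(\Sigma^iH,H(n))=\mathbb Z/2$ if $-n\le i\le 0$; (c) $\mathcal D(\Sigma^iH,H(-1))=0$ for all $i$; (d) for $n\geq2$, $\mathcal D(\Sigma^iH,H(-n))=\mathbb Z/2$ if $0\le i\le n-2$; (e) $\mathcal D(\Sigma^iH,B_r)=\mathbb Z/2$ if $-(r+2)\le i\le-2$.
   Context: A $\underline{\mathbb Z/2}$-module is a pair of $\mathbb F_2$-vector spaces $M_\Theta,M_\bullet$ with maps $t\colon M_\Theta\to M_\Theta$, $p^*\colon M_\bullet\to M_\Theta$, $p_*\colon M_\Theta\to M_\bullet$ with $tp^*=p^*$, $p_*t=p_*$, $t^2=1$, $p^*p_*=1+t$, $p_*p^*=0$. $H$: both spaces $\mathbb F_2$, $t=p^*=\mathrm{id}$, $p_*=0$. $F$: $F_\Theta=\mathbb F_2^2$, $t$ the swap, $F_\bullet=\mathbb F_2$, $p_*(x,y)=x+y$, $p^*(z)=(z,z)$. $p\colon F\to H$, $p\colon H\to F$ the unique nonzero maps, $u=1+t$. Homological grading, $(\Sigma C)_i=C_{i-1}$. $A_k$: $F$ in degrees $k,\dots,0$, differentials $u$. $H(0)=H$ in degree $0$; for $n>0$, $H(-n)$: $H$ in degree $n$, $F$ in degrees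 $n-1,\dots,0$, differentials $p,u,\dots,u$; $H(n)$: $F$ in degrees $0,\dots,-(n-1)$, $H$ in degree $-n$, differentials $u,\dots,u,p$. $B_r$: $H$ in degree $0$, $F$ in degrees $-1,\dots,-(r+1)$, $H$ in degree $-(r+2)$, differentials $p,u,\dots,u,p$. $\mathcal D(X,Y)$ denotes morphisms in the derived category $\mathcal D(\underline{\mathbb Z/2})$ of chain complexes of $\underline{\mathbb Z/2}$-modules. *)

From mathcomp Require Import all_boot all_algebra.
From mathcomp Require Import zify.
Set Implicit Arguments. Unset Strict Implicit. Unset Printing Implicit Defensive.
Import GRing.Theory.
Local Open Scope ring_scope.

Definition flin (U V : lmodType 'F_2) (f : U -> V) : Prop :=
  forall (a : 'F_2) (x y : U), f (a *: x + y) = a *: f x + f y.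

(* A Z/2-module (Z/2-Mackey functor): M_Theta, M_bullet, t, p^*, p_* *)
Record z2mod := Z2Mod {
  MT : lmodType 'F_2;
  MB : lmodType 'F_2;
  tr : MT -> MT;
  res : MB -> MT;
  tra : MT -> MB;
  tr_lin : flin tr; res_lin : flin res; tra_lin : flin tra;
  tr_res : forall x, tr (res x) = res x;
  tra_tr : forall x, tra (tr x) = tra x;
  tr_tr : forall x, tr (tr x) = x;
  res_tra : forall x, res (tra x) = x + tr x;
  tra_res : forall x, tra (res x) = 0 }.

Record mhom (M N : z2mod) := MHom {
  hT : MT M -> MT N;
  hB : MB M -> MB N;
  hT_lin : flin hT; hB_lin : flin hB;
  hT_tr : forall x, hT (tr x) = tr (hT x);
  hT_res : forall x, hT (res x) = res (hB x);
  hB_tra : forall x, hB (tra x) = tra (hT x) }.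

Definition heq M N (f g : mhom M N) : Prop :=
  (forall x, hT f x = hT g x) /\ (forall x, hB f x = hB g x).

Lemma flin0 (U V : lmodType 'F_2) (f : U -> V) : flin f -> f 0 = 0.
Proof.
move=> lf; have := lf 1 0 0; rewrite scaler0 addr0 scale1r => e.
by apply: (addrI (f 0)); rewrite addr0 -e.
Qed.

Lemma flin_comp (U V W : lmodType 'F_2) (f : U -> V) (g : V -> W) :
  flin f -> flin g -> flin (fun x => g (f x)).
Proof. by move=> lf lg a x y; rewrite lf lg. Qed.

Lemma flin_zero (U V : lmodType 'F_2) : flin (fun _ : U => (0 : V)).
Proof. by move=> a x y; rewrite scaler0 addr0. Qed.

Definition mcomp M N P (g : mhom N P) (f : mhom M N) : mhom M P.
Proof.
refine (@MHom M P (fun x => hT g (hT f x)) (fun x => hB g (hB f x))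
  (flin_comp (hT_lin f) (hT_lin g)) (flin_comp (hB_lin f) (hB_lin g)) _ _ _).
- by move=> x; rewrite hT_tr hT_tr.
- by move=> x; rewrite hT_res hT_res.
- by move=> x; rewrite hB_tra hB_tra.
Defined.

Definition mzero M N : mhom M N.
Proof.
refine (@MHom M N (fun _ => 0) (fun _ => 0) (@flin_zero _ _) (@flin_zero _ _) _ _ _).
- by move=> _; rewrite (flin0 (@tr_lin N)).
- by move=> _; rewrite (flin0 (@res_lin N)).
- by move=> _; rewrite (flin0 (@tra_lin N)).
Defined.

(* Chain complexes, homological grading: dif n : C_(n+1) -> C_n *)
Record cx := Cx {
  obj : int -> z2mod;
  dif : forall n : int, mhom (obj (n + 1)) (obj n);
  dif_dif : forall n : int, heq (mcomp (dif n) (dif (n + 1))) (mzero _ _) }.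

Record cmap (X Y : cx) := CMap {
  cm : forall n : int, mhom (obj X n) (obj Y n);
  cm_comm : forall n : int,
    heq (mcomp (cm n) (dif X n)) (mcomp (dif Y n) (cm (n + 1))) }.

Definition cmcomp (X Y Z : cx) (g : cmap Y Z) (f : cmap X Y) : cmap X Z.
Proof.
refine (@CMap X Z (fun n => mcomp (cm g n) (cm f n)) _).
move=> n; have [fT fB] := cm_comm f n; have [gT gB] := cm_comm g n.
split=> x /=.
- by move: (fT x) (gT (hT (cm f (n + 1)) x)) => /= -> ->.
- by move: (fB x) (gB (hB (cm f (n + 1)) x)) => /= -> ->.
Defined.

Definition homotopic (X Y : cx) (f g : cmap X Y) : Prop :=
  exists h : forall n : int, mhom (obj X n) (obj Y (n + 1)),
  forall n : int,
    (forall x, hT (cm f (n + 1)) x - hT (cm g (n + 1)) x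
               = hT (dif Y (n + 1)) (hT (h (n + 1)) x) + hT (h n) (hT (dif X n) x)) /\
    (forall x, hB (cm f (n + 1)) x - hB (cm g (n + 1)) x
               = hB (dif Y (n + 1)) (hB (h (n + 1)) x) + hB (h n) (hB (dif X n) x)).

(* quasi-isomorphism: induces isomorphisms on homology (computed levelwise,
   at Theta and at bullet), in every degree n+1 *)
Definition qis (X Y : cx) (f : cmap X Y) : Prop :=
  (forall n : int, forall x : MT (obj X (n + 1)),
     hT (dif X n) x = 0 ->
     (exists y, hT (cm f (n + 1)) x = hT (dif Y (n + 1)) y) ->
     exists z, x = hT (dif X (n + 1)) z) /\
  (forall n : int, forall y : MT (obj Y (n + 1)),
     hT (dif Y n) y = 0 ->
     exists x z, hT (dif X n) x = 0 /\ y = hT (cm f (n + 1)) x + hT (dif Y (n + 1)) z) /\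
  (forall n : int, forall x : MB (obj X (n + 1)),
     hB (dif X n) x = 0 ->
     (exists y, hB (cm f (n + 1)) x = hB (dif Y (n + 1)) y) ->
     exists z, x = hB (dif X (n + 1)) z) /\
  (forall n : int, forall y : MB (obj Y (n + 1)),
     hB (dif Y n) y = 0 ->
     exists x z, hB (dif X n) x = 0 /\ y = hB (cm f (n + 1)) x + hB (dif Y (n + 1)) z).

(* A morphism X -> Y in D is represented by a roof X <-s- R -f-> Y with s a qis *)
Record roof (X Y : cx) := Roof {
  rsrc : cx;
  rq : cmap rsrc X;
  rq_qis : qis rq;
  rf : cmap rsrc Y }.

(* equality of roofs in D(X,Y) (calculus of right fractions in K(A)) *)
Definition roof_equiv (X Y : cx) (r1 r2 : roof X Y) : Prop :=
  exists (Z : cx) (u : cmap Z (rsrc r1)) (v : cmap Z (rsrc r2)),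
    qis (cmcomp (rq r1) u) /\
    homotopic (cmcomp (rq r1) u) (cmcomp (rq r2) v) /\
    homotopic (cmcomp (rf r1) u) (cmcomp (rf r2) v).

Definition DHomCard (X Y : cx) (m : nat) : Prop :=
  exists f : 'I_m -> roof X Y,
    (forall i j, roof_equiv (f i) (f j) -> i = j) /\
    (forall r : roof X Y, exists i, roof_equiv r (f i)).

Lemma two_F2 (x : 'F_2) : x + x = 0.
Proof.
have two2 : (2%:R : 'F_2) = 0 by apply/val_inj.
by rewrite -mulr2n -mulr_natr two2 mulr0.
Qed.

Definition F2r : lmodType 'F_2 := ('F_2)^o.
Definition V2 : lmodType 'F_2 := 'rV['F_2]_2.
Definition V0 : lmodType 'F_2 := 'rV['F_2]_0.

Lemma flin_id (U : lmodType 'F_2) : flin (fun x : U => x).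
Proof. by []. Qed.

Definition Hmod : z2mod.
Proof.
refine (@Z2Mod F2r F2r (fun x => x) (fun x => x) (fun _ => 0)
  (@flin_id _) (@flin_id _) (@flin_zero _ _) _ _ _ _ _) => // x.
by rewrite two_F2.
Defined.

Definition swap2 (x : V2) : V2 := \row_(j < 2) x 0 (rev_ord j).
Definition sum2 (x : V2) : F2r := x 0 0 + x 0 1.
Definition diag2 (z : F2r) : V2 := \row_(j < 2) z.

Lemma rev01 : rev_ord (0 : 'I_2) = 1. Proof. exact/val_inj. Qed.
Lemma rev10 : rev_ord (1 : 'I_2) = 0. Proof. exact/val_inj. Qed.

Lemma swap2_lin : flin swap2.
Proof. by move=> a x y; apply/rowP=> j; rewrite !mxE. Qed.
Lemma sum2_lin : flin sum2.
Proof.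
move=> a x y; rewrite /sum2 !mxE /GRing.scale /=.
by rewrite mulrDr addrACA.
Qed.
Lemma diag2_lin : flin diag2.
Proof. by move=> a x y; apply/rowP=> j; rewrite !mxE. Qed.

Lemma swap2K x : swap2 (swap2 x) = x.
Proof. by apply/rowP=> j; rewrite !mxE rev_ordK. Qed.
Lemma swap2_diag z : swap2 (diag2 z) = diag2 z.
Proof. by apply/rowP=> j; rewrite !mxE. Qed.
Lemma sum2_swap x : sum2 (swap2 x) = sum2 x.
Proof. by rewrite /sum2 !mxE rev01 rev10 addrC. Qed.
Lemma sum2_diag z : sum2 (diag2 z) = 0.
Proof. by rewrite /sum2 !mxE two_F2. Qed.
Lemma swap2D x y : swap2 (x + y) = swap2 x + swap2 y.
Proof. by apply/rowP=> j; rewrite !mxE. Qed.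
Lemma sum2D x y : sum2 (x + y) = sum2 x + sum2 y.
Proof. by rewrite /sum2 !mxE addrACA. Qed.

Definition Fmod : z2mod.
Proof.
refine (@Z2Mod V2 F2r swap2 diag2 sum2 swap2_lin diag2_lin sum2_lin _ _ _ _ _).
- by move=> x; apply/rowP=> j; rewrite !mxE.
- by move=> x; rewrite /sum2 !mxE rev01 rev10 addrC.
- by move=> x; apply/rowP=> j; rewrite !mxE rev_ordK.
- move=> x; apply/rowP=> j; rewrite !mxE /sum2.
  case: j => -[|[|//]] ? ; rewrite /=.
  + by congr (_ + _); [congr (x 0 _) | congr (x 0 _)]; apply/val_inj.
  + by rewrite addrC; congr (_ + _); [congr (x 0 _) | congr (x 0 _)]; apply/val_inj.
- by move=> x; rewrite /sum2 !mxE two_F2.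
Defined.

Definition Zmod : z2mod.
Proof.
refine (@Z2Mod V0 V0 (fun _ => 0) (fun _ => 0) (fun _ => 0)
  (@flin_zero _ _) (@flin_zero _ _) (@flin_zero _ _) _ _ _ _ _) => // x.
- by apply/rowP=> -[].
- by rewrite addr0; apply/rowP=> -[].
Defined.

Definition pFH : mhom Fmod Hmod.
Proof.
refine (@MHom Fmod Hmod sum2 (fun _ => 0) sum2_lin (@flin_zero _ _) _ _ _) => /=.
- by move=> x; rewrite /sum2 !mxE rev01 rev10 addrC.
- by move=> x; rewrite /sum2 !mxE two_F2.
- by [].
Defined.

Definition pHF : mhom Hmod Fmod.
Proof.
refine (@MHom Hmod Fmod diag2 (fun x => x) diag2_lin (@flin_id _) _ _ _) => //=.
- by move=> x; apply/rowP=> j; rewrite !mxE.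
- by move=> x; rewrite /sum2 !mxE two_F2.
Defined.

Definition u2 (x : V2) : V2 := x + swap2 x.
Lemma u2_lin : flin u2.
Proof. by move=> a x y; rewrite /u2 swap2_lin scalerDr addrACA. Qed.

Definition uFF : mhom Fmod Fmod.
Proof.
refine (@MHom Fmod Fmod u2 (fun _ => 0) u2_lin (@flin_zero _ _) _ _ _) => /=.
- by move=> x; rewrite /u2 swap2D swap2K addrC.
- by move=> x; rewrite /u2 swap2_diag; apply/rowP=> j; rewrite !mxE two_F2.
- by move=> x; rewrite /u2 sum2D sum2_swap two_F2.
Defined.

Inductive piece := PH | PF | P0.

Definition mod_of (a : piece) : z2mod :=
  match a with PH => Hmod | PF => Fmod | P0 => Zmod end.

Definition std (a b : piece) : mhom (mod_of a) (mod_of b) :=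
  match a as a' return mhom (mod_of a') (mod_of b) with
  | PF => match b as b' return mhom Fmod (mod_of b') with
          | PH => pFH | PF => uFF | P0 => mzero _ _ end
  | PH => match b as b' return mhom Hmod (mod_of b') with
          | PF => pHF | _ => mzero _ _ end
  | P0 => mzero _ _
  end.

Lemma std_dd (a b c : piece) : ~ (a = PF /\ b = PH /\ c = PF) ->
  heq (mcomp (std b c) (std a b)) (mzero _ _).
Proof.
have s0 : sum2 0 = 0 by rewrite /sum2 !mxE addr0.
have d0 : diag2 0 = 0 by apply/rowP=> j; rewrite !mxE.
have u0 : u2 0 = 0 by rewrite /u2 /swap2; apply/rowP=> j; rewrite !mxE addr0.
have tV (v : V2) : v + v = 0 by apply/rowP=> j; rewrite !mxE two_F2.
case: a; case: b; case: c => //= h; split=> x //=;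
  rewrite ?s0 ?d0 ?u0 //.
- exact: sum2_diag.
- by rewrite /u2 swap2_diag tV.
- by case: h.
- by rewrite /u2 sum2D sum2_swap two_F2.
- by rewrite /u2 swap2D swap2K [swap2 x + x]addrC tV.
Qed.

Definition seq_cx_ok (c : int -> piece) : Prop :=
  forall n : int, ~ (c (n + 1 + 1) = PF /\ c (n + 1) = PH /\ c n = PF).

Definition mk_cx (c : int -> piece) (hc : seq_cx_ok c) : cx :=
  @Cx (fun n => mod_of (c n)) (fun n => std (c (n + 1)) (c n))
      (fun n => std_dd (hc n)).

Definition cSH (i : int) (m : int) : piece := if m == i then PH else P0.
Lemma cSH_ok i : seq_cx_ok (cSH i).
Proof. move=> n; rewrite /cSH; repeat case: ifP => ?; by move=> [] ? [] ? ?. Qed.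
Definition SigmaH (i : int) : cx := mk_cx (@cSH_ok i).

Definition cA (k : nat) (m : int) : piece :=
  if (0 <= m) && (m <= k%:Z) then PF else P0.
Lemma cA_ok k : seq_cx_ok (cA k).
Proof. move=> n; rewrite /cA; repeat case: ifP => ?; by move=> [] ? [] ? ?. Qed.
Definition Acx (k : nat) : cx := mk_cx (@cA_ok k).

Definition cHpos (n : nat) (m : int) : piece :=
  if m == - n%:Z then PH
  else if (- n%:Z + 1 <= m) && (m <= 0) then PF else P0.
Lemma cHpos_ok n : seq_cx_ok (cHpos n).
Proof.
move=> k; rewrite /cHpos; repeat case: ifP => ?; move=> [] ? [] ? ?; try discriminate; lia.
Qed.
Definition Hpos (n : nat) : cx := mk_cx (@cHpos_ok n).

Definition cHneg (n : nat) (m : int) : piece :=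
  if m == n%:Z then PH
  else if (0 <= m) && (m <= n%:Z - 1) then PF else P0.
Lemma cHneg_ok n : seq_cx_ok (cHneg n).
Proof.
move=> k; rewrite /cHneg; repeat case: ifP => ?; move=> [] ? [] ? ?; try discriminate; lia.
Qed.
Definition Hneg (n : nat) : cx := mk_cx (@cHneg_ok n).

Definition cB (r : nat) (m : int) : piece :=
  if m == 0 then PH
  else if m == - (r%:Z + 2) then PH
  else if (- (r%:Z + 1) <= m) && (m <= -1) then PF else P0.
Lemma cB_ok r : seq_cx_ok (cB r).
Proof.
move=> k; rewrite /cB; repeat case: ifP => ?; move=> [] ? [] ? ?; try discriminate; lia.
Qed.
Definition Bcx (r : nat) : cx := mk_cx (@cB_ok r).

(* A map of Z/2-modules H -> M is the same as an element of M_bullet, so chain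
   maps Sigma^i H -> Y are the bullet cycles of Y in degree i.  A roof
   Sigma^i H <-s- R -f-> Y determines the bullet homology class of f x, where x
   is a bullet cycle of R with s x the generator: such an x exists and is unique
   up to boundaries because s is a quasi-isomorphism, and two roofs are
   equivalent exactly when they determine the same class.  Hence
   D(Sigma^i H, Y) is the bullet homology H_i(Y_bullet).  On bullets, p : F -> H
   and u vanish while p : H -> F is the identity, so for the complexes of the
   statement H_i(Y_bullet) is 0 or F_2, read off from the pieces in degrees
   i+1, i and i-1. *)

From mathcomp Require Import all_boot all_algebra.
From mathcomp Require Import zify.
Set Implicit Arguments. Unset Strict Implicit. Unset Printing Implicit Defensive.
Import GRing.Theory.
Local Open Scope ring_scope.

Section FLinear.
Variables (U V : lmodType 'F_2) (f : U -> V).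
Hypothesis lf : flin f.

Lemma flinD x y : f (x + y) = f x + f y.
Proof. by rewrite -[x in LHS]scale1r lf scale1r. Qed.
Lemma flinZ a x : f (a *: x) = a *: f x.
Proof. by rewrite -[a *: x]addr0 lf (flin0 lf) addr0. Qed.
Lemma flinN x : f (- x) = - f x.
Proof. by rewrite -scaleN1r flinZ scaleN1r. Qed.
Lemma flinB x y : f (x - y) = f x - f y.
Proof. by rewrite flinD flinN. Qed.

End FLinear.

Section MhomLinear.
Variables (M N : z2mod) (f : mhom M N).

Lemma hT0 : hT f 0 = 0. Proof. exact: flin0 (hT_lin f). Qed.
Lemma hB0 : hB f 0 = 0. Proof. exact: flin0 (hB_lin f). Qed.
Lemma hBD x y : hB f (x + y) = hB f x + hB f y. Proof. exact: (flinD (hB_lin f) x y). Qed.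
Lemma hBN x : hB f (- x) = - hB f x. Proof. exact: (flinN (hB_lin f) x). Qed.
Lemma hBB x y : hB f (x - y) = hB f x - hB f y. Proof. exact: (flinB (hB_lin f) x y). Qed.
Lemma hTZ a x : hT f (a *: x) = a *: hT f x. Proof. exact: (flinZ (hT_lin f) a x). Qed.
Lemma hBZ a x : hB f (a *: x) = a *: hB f x. Proof. exact: (flinZ (hB_lin f) a x). Qed.

End MhomLinear.

Lemma res0 (M : z2mod) : res (0 : MB M) = 0.
Proof. exact: flin0 (@res_lin M). Qed.

Definition bullet_mhom (M : z2mod) (y : MB M) : mhom Hmod M.
Proof.
refine (@MHom Hmod M (fun a : F2r => (a : 'F_2) *: res y) (fun a : F2r => (a : 'F_2) *: y)
  _ _ _ _ _).
- by move=> a x z; rewrite scalerDl scalerA.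
- by move=> a x z; rewrite scalerDl scalerA.
- by move=> x /=; rewrite (flinZ (@tr_lin M)) tr_res.
- by move=> x /=; rewrite (flinZ (@res_lin M)).
- by move=> x /=; rewrite (flinZ (@tra_lin M)) tra_res scaler0 scale0r.
Defined.

Definition piece_mhom (c : piece) (M : z2mod) (y : MB M) : mhom (mod_of c) M :=
  match c return mhom (mod_of c) M with
  | PH => bullet_mhom y | _ => mzero _ _ end.

Definition coefT (c : piece) : MT (mod_of c) -> 'F_2 :=
  match c return MT (mod_of c) -> 'F_2 with
  | PH => fun a => a | _ => fun _ => 0 end.
Definition coefB (c : piece) : MB (mod_of c) -> 'F_2 :=
  match c return MB (mod_of c) -> 'F_2 with
  | PH | PF => fun a => a | P0 => fun _ => 0 end.
Definition oneB (c : piece) : MB (mod_of c) :=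
  match c return MB (mod_of c) with
  | PH | PF => (1 : 'F_2) | P0 => 0 end.

Section PieceH.
Variables (c : piece) (cH : c = PH).

Lemma piece_mhomT M (y : MB M) a : hT (piece_mhom c y) a = coefT a *: res y.
Proof. by move: a; rewrite cH. Qed.
Lemma piece_mhomB M (y : MB M) a : hB (piece_mhom c y) a = coefB a *: y.
Proof. by move: a; rewrite cH. Qed.
Lemma coefT_oneB (a : MT (mod_of c)) : coefT a *: res (oneB c) = a.
Proof. by move: a; rewrite cH => a; rewrite /GRing.scale /= mulr1. Qed.
Lemma coefB_oneB (a : MB (mod_of c)) : coefB a *: oneB c = a.
Proof. by move: a; rewrite cH => a; rewrite /GRing.scale /= mulr1. Qed.
Lemma coefB_of_oneB : coefB (oneB c) = 1.
Proof. by rewrite cH. Qed.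

End PieceH.

Lemma P0_bullet_eq0 (c : piece) : c = P0 -> forall x : MB (mod_of c), x = 0.
Proof. by move-> => x; apply/rowP => -[]. Qed.
Lemma P0_theta_eq0 (c : piece) : c = P0 -> forall x : MT (mod_of c), x = 0.
Proof. by move-> => x; apply/rowP => -[]. Qed.

Section BulletHomology.
Variables (Y : cx) (n : int).

Definition bcycle (y : MB (obj Y (n + 1))) : Prop := hB (dif Y n) y = 0.

Definition bhomologous (y y' : MB (obj Y (n + 1))) : Prop :=
  exists z, y - y' = hB (dif Y (n + 1)) z.

Lemma bhomologous_refl y : bhomologous y y.
Proof. by exists 0; rewrite subrr hB0. Qed.

Lemma bhomologous_sym y y' : bhomologous y y' -> bhomologous y' y.
Proof. by move=> [z hz]; exists (- z); rewrite hBN -hz opprB. Qed.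

Lemma bhomologous_trans y1 y2 y3 :
  bhomologous y1 y2 -> bhomologous y2 y3 -> bhomologous y1 y3.
Proof.
by move=> [z1 h1] [z2 h2]; exists (z1 + z2); rewrite hBD -h1 -h2 addrA subrK.
Qed.

End BulletHomology.

Lemma cmap_bcycle (R Y : cx) (f : cmap R Y) n x :
  bcycle x -> bcycle (hB (cm f (n + 1)) x).
Proof. by rewrite /bcycle => dx; have /= <- := (cm_comm f n).2 x; rewrite dx hB0. Qed.

(* Junk value [0] when [d != m]; it only occurs where the target piece is [P0]. *)
Definition transportB (R : cx) (d m : int) (x : MB (obj R d)) : MB (obj R m) :=
  match @eqP _ d m with
  | ReflectT e => eq_rect d (fun k => MB (obj R k)) x m e
  | ReflectF _ => 0 end.

Lemma transportB_id (R : cx) d x : @transportB R d d x = x.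
Proof. by rewrite /transportB; case: eqP => // e; rewrite (eq_irrelevance e (erefl d)). Qed.

Definition cmid (X : cx) : cmap X X.
Proof.
by refine (@CMap X X (fun m => @MHom _ _ (fun x => x) (fun x => x)
  (@flin_id _) (@flin_id _) (fun _ => erefl) (fun _ => erefl) (fun _ => erefl)) _).
Defined.

(** * Maps out of the sphere [Sigma^(n+1) H] *)

Section Sphere.
Variable n : int.
Local Notation S := (SigmaH (n + 1)).

Lemma cSH_top : cSH (n + 1) (n + 1) = PH.
Proof. by rewrite /cSH eqxx. Qed.
Lemma cSH_below : cSH (n + 1) n = P0.
Proof. by rewrite /cSH; case: eqP => // ?; lia. Qed.
Lemma cSH_above : cSH (n + 1) (n + 1 + 1) = P0.
Proof. by rewrite /cSH; case: eqP => // ?; lia. Qed.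
Lemma cSH_off m : m != n -> cSH (n + 1) (m + 1) = P0.
Proof. by move=> ne; rewrite /cSH; case: eqP => // ?; lia. Qed.

Definition sphere_gen : MB (obj S (n + 1)) := oneB (cSH (n + 1) (n + 1)).

Definition sphere_map (R : cx) (x : MB (obj R (n + 1))) (hx : bcycle x) : cmap S R.
Proof.
refine (@CMap S R (fun m => piece_mhom (cSH (n + 1) m) (@transportB R (n + 1) m x)) _).
move=> m; case: (eqVneq m n) => [->|ne]; split => a /=.
- rewrite (P0_theta_eq0 cSH_below (hT _ a)) hT0 (piece_mhomT cSH_top) transportB_id.
  by rewrite hTZ hT_res hx res0 scaler0.
- rewrite (P0_bullet_eq0 cSH_below (hB _ a)) hB0 (piece_mhomB cSH_top) transportB_id.
  by rewrite hBZ hx scaler0.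
- by rewrite (P0_theta_eq0 (cSH_off ne) a) !hT0.
- by rewrite (P0_bullet_eq0 (cSH_off ne) a) !hB0.
Defined.

Section SphereMapComp.
Variables (R Y : cx) (f : cmap R Y) (x : MB (obj R (n + 1))) (hx : bcycle x).

Lemma sphere_mapT_comp a :
  hT (cm (cmcomp f (sphere_map hx)) (n + 1)) a = coefT a *: res (hB (cm f (n + 1)) x).
Proof. by rewrite /= (piece_mhomT cSH_top) transportB_id hTZ hT_res. Qed.

Lemma sphere_mapB_comp a :
  hB (cm (cmcomp f (sphere_map hx)) (n + 1)) a = coefB a *: hB (cm f (n + 1)) x.
Proof. by rewrite /= (piece_mhomB cSH_top) transportB_id hBZ. Qed.

End SphereMapComp.

Lemma sphere_mapB (R : cx) (x : MB (obj R (n + 1))) (hx : bcycle x) :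
  hB (cm (sphere_map hx) (n + 1)) sphere_gen = x.
Proof.
by rewrite /= (piece_mhomB cSH_top) transportB_id coefB_of_oneB ?scale1r // cSH_top.
Qed.

Lemma qis_sphere_endo (g : cmap S S) :
  (forall a, hT (cm g (n + 1)) a = a) -> (forall a, hB (cm g (n + 1)) a = a) -> qis g.
Proof.
move=> gT gB; split; [|split; [|split]] => m; case: (eqVneq m n) => [->|ne].
- move=> x _ [y hy]; exists 0; rewrite hT0 -(gT x) hy.
  by rewrite (P0_theta_eq0 cSH_above y) hT0.
- by move=> x _ _; exists 0; rewrite hT0 (P0_theta_eq0 (cSH_off ne) x).
- by move=> y dy; exists y, 0; rewrite hT0 addr0 gT.
- by move=> y _; exists 0, 0; rewrite (P0_theta_eq0 (cSH_off ne) y) !hT0 addr0.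
- move=> x _ [y hy]; exists 0; rewrite hB0 -(gB x) hy.
  by rewrite (P0_bullet_eq0 cSH_above y) hB0.
- by move=> x _ _; exists 0; rewrite hB0 (P0_bullet_eq0 (cSH_off ne) x).
- by move=> y dy; exists y, 0; rewrite hB0 addr0 gB.
- by move=> y _; exists 0, 0; rewrite (P0_bullet_eq0 (cSH_off ne) y) !hB0 addr0.
Qed.

Lemma qis_comp_sphere_map (R : cx) (s : cmap R S) (x : MB (obj R (n + 1)))
    (hx : bcycle x) :
  hB (cm s (n + 1)) x = sphere_gen -> qis (cmcomp s (sphere_map hx)).
Proof.
move=> sx; apply: qis_sphere_endo => a.
- by rewrite sphere_mapT_comp sx coefT_oneB // cSH_top.
- by rewrite sphere_mapB_comp sx coefB_oneB // cSH_top.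
Qed.

Lemma qis_sphere_lift (R : cx) (s : cmap R S) : qis s ->
  exists2 x, bcycle x & hB (cm s (n + 1)) x = sphere_gen.
Proof.
case=> _ [_ [_ surjB]].
have [x [z [dx ->]]] := surjB n sphere_gen (P0_bullet_eq0 cSH_below _).
by exists x; rewrite // (P0_bullet_eq0 cSH_above z) hB0 addr0.
Qed.

Lemma qis_sphere_lift_unique (R Y : cx) (s : cmap R S) (f : cmap R Y) : qis s ->
  forall x1 x2, bcycle x1 -> bcycle x2 ->
  hB (cm s (n + 1)) x1 = hB (cm s (n + 1)) x2 ->
  bhomologous (hB (cm f (n + 1)) x1) (hB (cm f (n + 1)) x2).
Proof.
case=> _ [_ [injB _]] x1 x2 d1 d2 e12.
have d12 : hB (dif R n) (x1 - x2) = 0 by rewrite hBB d1 d2 subrr.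
have [z hz] : exists z, x1 - x2 = hB (dif R (n + 1)) z.
  by apply: injB d12 _; exists 0; rewrite hBB e12 subrr hB0.
exists (hB (cm f (n + 1 + 1)) z).
by rewrite -hBB hz; exact: (cm_comm f (n + 1)).2 z.
Qed.

Definition roof_class (Y : cx) (r : roof S Y) (y : MB (obj Y (n + 1))) : Prop :=
  exists x, [/\ bcycle x, hB (cm (rq r) (n + 1)) x = sphere_gen
              & bhomologous (hB (cm (rf r) (n + 1)) x) y].

Section RoofClass.
Variable Y : cx.
Implicit Types (r : roof S Y) (y : MB (obj Y (n + 1))).

Lemma roof_class_exists r : exists2 y, bcycle y & roof_class r y.
Proof.
have [x dx sx] := qis_sphere_lift (rq_qis r).
exists (hB (cm (rf r) (n + 1)) x); first exact: cmap_bcycle.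
by exists x; split; last exact: bhomologous_refl.
Qed.

Lemma roof_class_unique r y1 y2 : roof_class r y1 -> roof_class r y2 -> bhomologous y1 y2.
Proof.
move=> [x1 [d1 s1 h1]] [x2 [d2 s2 h2]].
have h12 := qis_sphere_lift_unique (rf r) (rq_qis r) d1 d2 (etrans s1 (esym s2)).
exact: bhomologous_trans (bhomologous_sym h1) (bhomologous_trans h12 h2).
Qed.

Lemma roof_class_homologous r y y' : roof_class r y -> bhomologous y y' -> roof_class r y'.
Proof. by move=> [x [dx sx hx]] hy; exists x; split=> //; exact: bhomologous_trans hy. Qed.

Lemma roof_equiv_class r1 r2 y : roof_equiv r1 r2 -> roof_class r1 y -> roof_class r2 y.
Proof.
move=> [Z [u [v [q [[h hq] [h' hf]]]]]] hy.
have [w dw sw] := qis_sphere_lift q.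
have s2w : hB (cm (rq r2) (n + 1)) (hB (cm v (n + 1)) w) = sphere_gen.
  have /= := (hq n).2 w.
  rewrite dw hB0 addr0 (P0_bullet_eq0 cSH_above (hB (h (n + 1)) w)) hB0.
  by move/eqP; rewrite subr_eq0 => /eqP <-.
have hy' : roof_class r1 (hB (cm (rf r1) (n + 1)) (hB (cm u (n + 1)) w)).
  by exists (hB (cm u (n + 1)) w); split=> //; [exact: cmap_bcycle | exact: bhomologous_refl].
have f12 : bhomologous (hB (cm (rf r1) (n + 1)) (hB (cm u (n + 1)) w))
                       (hB (cm (rf r2) (n + 1)) (hB (cm v (n + 1)) w)).
  by exists (hB (h' (n + 1)) w); have /= := (hf n).2 w; rewrite dw hB0 addr0.
exists (hB (cm v (n + 1)) w); split=> //; first exact: cmap_bcycle.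
exact: bhomologous_trans (bhomologous_sym f12) (roof_class_unique hy' hy).
Qed.

Lemma roof_class_equiv r1 r2 y : roof_class r1 y -> roof_class r2 y -> roof_equiv r1 r2.
Proof.
move=> [x1 [d1 s1 h1]] [x2 [d2 s2 h2]].
have [z hz] := bhomologous_trans h1 (bhomologous_sym h2).
exists S, (sphere_map d1), (sphere_map d2); split; [|split].
- exact: qis_comp_sphere_map.
- exists (fun m => mzero _ _) => m; case: (eqVneq m n) => [->|ne]; split => a.
  + by rewrite !sphere_mapT_comp s1 s2 subrr /= hT0 addr0.
  + by rewrite !sphere_mapB_comp s1 s2 subrr /= hB0 addr0.
  + by rewrite (P0_theta_eq0 (cSH_off ne) a) !hT0 subrr addr0.
  + by rewrite (P0_bullet_eq0 (cSH_off ne) a) !hB0 subrr addr0.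
- exists (fun m => piece_mhom (cSH (n + 1) m) (@transportB Y (n + 1 + 1) (m + 1) z)) => m.
  case: (eqVneq m n) => [->|ne]; split => a.
  + rewrite (P0_theta_eq0 cSH_below (hT (dif _ n) a)) hT0 addr0.
    rewrite (piece_mhomT cSH_top) transportB_id !sphere_mapT_comp hTZ hT_res.
    by rewrite -scalerBr -(flinB (@res_lin _)) hz.
  + rewrite (P0_bullet_eq0 cSH_below (hB (dif _ n) a)) hB0 addr0.
    by rewrite (piece_mhomB cSH_top) transportB_id !sphere_mapB_comp hBZ -scalerBr hz.
  + by rewrite (P0_theta_eq0 (cSH_off ne) a) !hT0 subrr addr0.
  + by rewrite (P0_bullet_eq0 (cSH_off ne) a) !hB0 subrr addr0.
Qed.

Definition cycle_roof y (hy : bcycle y) : roof S Y :=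
  @Roof _ _ S (cmid S) (@qis_sphere_endo (cmid S) (fun _ => erefl) (fun _ => erefl))
    (sphere_map hy).

Lemma cycle_roof_class y (hy : bcycle y) : roof_class (cycle_roof hy) y.
Proof.
exists sphere_gen; split=> //; first exact: (P0_bullet_eq0 cSH_below).
by rewrite [hB _ _]sphere_mapB; exact: bhomologous_refl.
Qed.

End RoofClass.

Lemma DHomCard_bullet_homology (Y : cx) m (ys : 'I_m -> MB (obj Y (n + 1))) :
  (forall i, bcycle (ys i)) ->
  (forall i j, bhomologous (ys i) (ys j) -> i = j) ->
  (forall y, bcycle y -> exists i, bhomologous y (ys i)) ->
  DHomCard S Y m.
Proof.
move=> cyc inj surj; exists (fun i => cycle_roof (cyc i)); split.
  move=> i j eij; apply: inj; apply: roof_class_unique (cycle_roof_class (cyc j)).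
  exact: roof_equiv_class eij (cycle_roof_class (cyc i)).
move=> r; have [y dy ry] := roof_class_exists r; have [i hi] := surj y dy.
exists i; apply: roof_class_equiv (cycle_roof_class (cyc i)).
exact: roof_class_homologous hi.
Qed.

End Sphere.

(** * Bullet homology of the complexes built from pieces *)

(* Acyclicity at [b] of the bullet part of [a -> b -> c]: only [std PH PF] is
   nonzero on bullets. *)
Definition bullet_acyclic (a b c : piece) : bool :=
  match a, b, c with
  | _, P0, _ | _, PH, PF | PH, PF, _ => true
  | _, _, _ => false
  end.

Lemma std_bullet_exact a b c : bullet_acyclic a b c ->
  forall y, hB (std b c) y = 0 -> exists z, y = hB (std a b) z.
Proof.
case: a; case: b; case: c => //= _ y dy;
  first [by exists y | by exists 0; rewrite ?(P0_bullet_eq0 (erefl P0) y)].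
Qed.

Lemma std_bullet_rank_one a b c : ~~ bullet_acyclic a b c ->
  [/\ b <> P0, forall y, hB (std b c) y = 0 & forall z, hB (std a b) z = 0].
Proof. by case: a; case: b; case: c. Qed.

Lemma bullet_piece_cases b : b <> P0 -> forall y : MB (mod_of b), y = 0 \/ y = oneB b.
Proof.
case: b => // _ y; case: y => -[|[|//]] ?; [left|right|left|right]; exact/val_inj.
Qed.

Lemma oneB_neq0 b : b <> P0 -> oneB b != 0.
Proof. by case: b. Qed.

Lemma DHomCard_SigmaH_mk_cx (c : int -> piece) (hc : seq_cx_ok c) (i : int) (m : nat) :
  m = (if bullet_acyclic (c (i + 1)) (c i) (c (i - 1)) then 1%N else 2%N) ->
  DHomCard (SigmaH i) (mk_cx hc) m.
Proof.
have [n ->] : exists n : int, i = n + 1 by exists (i - 1); rewrite subrK.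
rewrite addrK; case: ifP => [acyc | /negbT rank1] ->.
- apply: (@DHomCard_bullet_homology _ _ _ (fun _ => 0)) => [_ | k l _ | y dy].
  + exact: hB0.
  + by rewrite (ord1 k) (ord1 l).
  + have [z ->] := std_bullet_exact acyc dy.
    by exists ord0; exists z; rewrite subr0.
- have [nz d_out d_in] := std_bullet_rank_one rank1.
  pose ys (k : 'I_2) : MB (obj (mk_cx hc) (n + 1)) := if k == ord0 then 0 else oneB _.
  apply: (@DHomCard_bullet_homology _ _ _ ys) => [k | k l [z] | y dy].
  + exact: d_out.
  + rewrite d_in => /eqP; rewrite subr_eq0 /ys.
    have one_neq0 := negbTE (oneB_neq0 nz).
    by case: k l => -[|[|//]] ? [[|[|//]] ?] /= E; apply/val_inj;
      move: E; rewrite // ?[0 == _]eq_sym one_neq0.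
  + case: (bullet_piece_cases nz y) => ->;
      [exists ord0 | exists (Ordinal (isT : 1 < 2)%N)]; exact: bhomologous_refl.
Qed.

Ltac decide_pieces :=
  repeat match goal with
  | |- context [if ?b then PF else _] => destruct b eqn:?
  | |- context [if ?b then PH else _] => destruct b eqn:?
  end; try case: ifP => ?; first [done | lia].

Theorem proposition4p22 :
  (forall (k : nat) (i : int),
     DHomCard (SigmaH i) (Acx k) (if (0 <= i) && (i <= k%:Z) then 2%N else 1%N)) /\
  (forall (n : nat) (i : int),
     DHomCard (SigmaH i) (Hpos n) (if (- n%:Z <= i) && (i <= 0) then 2%N else 1%N)) /\
  (forall i : int, DHomCard (SigmaH i) (Hneg 1) 1%N) /\
  (forall n : nat, (2 <= n)%N -> forall i : int,
     DHomCard (SigmaH i) (Hneg n) (if (0 <= i) && (i <= n%:Z - 2) then 2%N else 1%N)) /\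
  (forall (r : nat) (i : int),
     DHomCard (SigmaH i) (Bcx r)
       (if (- (r%:Z + 2) <= i) && (i <= -2) then 2%N else 1%N)).
Proof.
split; [|split; [|split; [|split]]].
- by move=> k i; apply: DHomCard_SigmaH_mk_cx; rewrite /cA; decide_pieces.
- by move=> n i; apply: DHomCard_SigmaH_mk_cx; rewrite /cHpos; decide_pieces.
- by move=> i; apply: (DHomCard_SigmaH_mk_cx (@cHneg_ok 1)); rewrite /cHneg; decide_pieces.
- by move=> n n2 i; apply: DHomCard_SigmaH_mk_cx; rewrite /cHneg; decide_pieces.
- by move=> r i; apply: DHomCard_SigmaH_mk_cx; rewrite /cB; decide_pieces.
Qed.
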